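(* Let $G$ and $H$ be finite abelian groups, written additively, of the same even order $k>2$, let $f:G\to H$ be semi-planar, and suppose $S(G,H;f)$ splits into two substructures $S_1$ and $S_2$ with $\mathcal{L}(0,0)\in S_1$. For $a\in G$ let $P_a^1=\{b\in H : \mathcal{L}(a,b)\in S_1\}$. Then the set $A=\{a\in G : P_0^1=P_a^1\}$ is either a subgroup of $G$ of index $2$, or $A=G$.
   Context: A function $f:G\to H$ is semi-planar if for every non-identity $a\in G$ and every $y\in H$, the equation $f(x+a)-f(x)=y$ has either $0$ or $2$ solutions $x\in G$. The incidence structure $S(G,H;f)$ has points $(x,y)\in G\times H$ and lines $\mathcal{L}(a,b)$ for $(a,b)\in G\times H$, with $(x,y)$ incident with $\mathcal{L}(a,b)$ iff $y=f(x-a)+b$. Its incidence graph is the bipartite graph on points and lines with an edge for each incident pair. $S(G,H;f)$ splits into two substructures $S_1,S_2$ if its incidence graph has exactly two connected components; $S_1,S_2$ are the incidence structures formed by the points and lines of the two components, and $\mathcal{L}(a,b)\in S_i$ means the line lies in component $S_i$. *)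

From HB Require Import structures.
From mathcomp Require Import all_boot all_order all_algebra.
Set Implicit Arguments. Unset Strict Implicit. Unset Printing Implicit Defensive.
Import GRing.Theory.
Local Open Scope ring_scope.

Definition semi_planar (G H : finZmodType) (f : G -> H) : Prop :=
  forall (a : G), a != 0 -> forall (y : H),
    let n := #|[set x : G | f (x + a) - f x == y]| in
    (n == 0)%N || (n == 2)%N.

(* Vertices of the incidence graph of S(G,H;f): points inl (x,y), lines inr (a,b). *)
Definition vertex (G H : finZmodType) : finType := ((G * H) + (G * H))%type.

Definition incident (G H : finZmodType) (f : G -> H) (p l : G * H) : bool :=
  p.2 == f (p.1 - l.1) + l.2.

Definition inc_edge (G H : finZmodType) (f : G -> H) : rel (vertex G H) :=
  fun u v =>
    match u, v with
    | inl p, inr l => incident f p l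
    | inr l, inl p => incident f p l
    | _, _ => false
    end.

(* S(G,H;f) splits into two substructures: the incidence graph has exactly two
   connected components. *)
Definition splits_in_two (G H : finZmodType) (f : G -> H) : Prop :=
  n_comp (inc_edge f) (@predT (vertex G H)) = 2%N.

Definition P1 (G H : finZmodType) (f : G -> H) (a : G) : {set H} :=
  [set b : H | connect (inc_edge f) (inr (0, 0)) (inr (a, b))].

From mathcomp Require Import all_boot all_order all_algebra.
Import GRing.Theory.
Local Open Scope ring_scope.

(* The translations (x, y) |-> (x + s, y) and L(a, b) |-> L(a + s, b) are
   automorphisms of the incidence graph.  With exactly two components, two
   vertices are connected iff they lie on the same side of L(0, 0), so
   a |-> [L(a, 0) ~ L(0, 0)] is a homomorphism from G to the group of order 2,
   and A is its kernel. *)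

Set Implicit Arguments.
Unset Strict Implicit.

Section TwoComponents.
Variables (T : finType) (e : rel T).
Hypothesis e_sym : connect_sym e.

Lemma n_comp_ge3 {x y z} :
  ~~ connect e x y -> ~~ connect e x z -> ~~ connect e y z -> (3 <= n_comp e T)%N.
Proof.
move=> nxy nxz nyz.
set rs := [:: fingraph.root e x; fingraph.root e y; fingraph.root e z].
have uniq_rs : uniq rs.
  by rewrite /= !inE !negb_or !fingraph.root_connect // nxy nxz nyz.
rewrite -[3%N]/(size rs) -(card_uniqP uniq_rs); apply: subset_leq_card.
by apply/subsetP => r; rewrite !inE => /or3P[] /eqP ->; rewrite fingraph.roots_root.
Qed.

Lemma connect_two_comp v x y :
  n_comp e T = 2%N -> connect e x y = (connect e v x == connect e v y).
Proof.
move=> two; apply/idP/eqP => [xy | ].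
  by rewrite (same_connect_r e_sym xy).
case vx: (connect e v x) => /esym vy.
  by apply: (connect_trans (y := v)); rewrite // e_sym.
apply: contraT => nxy.
by have := n_comp_ge3 (negbT vx) (negbT vy) nxy; rewrite two.
Qed.

End TwoComponents.

Section IncidenceGraph.
Variables (G H : finZmodType) (f : G -> H).

Local Notation e := (inc_edge f).

Lemma inc_edge_sym : symmetric e.
Proof. by case=> [p|l] [q|m]. Qed.

Lemma connect_inc_sym : connect_sym e.
Proof. exact: sym_connect_sym inc_edge_sym. Qed.

Definition translate (s : G) (u : vertex G H) : vertex G H :=
  match u with
  | inl p => inl (p.1 + s, p.2)
  | inr l => inr (l.1 + s, l.2)
  end.

Lemma translateK s : cancel (translate s) (translate (- s)).
Proof. by case=> [[x y]|[a b]] /=; rewrite addrK. Qed.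

Lemma inc_edge_translate s u v : e (translate s u) (translate s v) = e u v.
Proof.
have subD x a : x + s - (a + s) = x - a by rewrite opprD addrACA subrr addr0.
by case: u v => [[x y]|[a b]] [[x' y']|[a' b']]; rewrite /= /incident /= ?subD.
Qed.

Lemma connect_translate_imply s u v :
  connect e u v -> connect e (translate s u) (translate s v).
Proof.
move=> /connectP[p + ->]; elim: p u => [|w p IH] u //= /andP[euw pw].
by apply: connect_trans (IH _ pw); apply: connect1; rewrite inc_edge_translate.
Qed.

Lemma connect_translate s u v :
  connect e (translate s u) (translate s v) = connect e u v.
Proof.
apply/idP/idP; last exact: connect_translate_imply.
by move/(connect_translate_imply (- s)); rewrite !translateK.
Qed.

Definition linked0 (a : G) : bool := connect e (inr (0, 0)) (inr (a, 0)).

Lemma connect_lines0 x y : connect e (inr (y, 0)) (inr (x, 0)) = linked0 (x - y).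
Proof.
by rewrite /linked0 -[RHS](connect_translate y) /= add0r subrK.
Qed.

Lemma linked0_sub (two : splits_in_two f) x y :
  linked0 (x - y) = (linked0 x == linked0 y).
Proof.
rewrite -connect_lines0 eq_sym.
exact: connect_two_comp connect_inc_sym (inr (0, 0)) _ _ two.
Qed.

Lemma P1_eq0 a : (P1 f 0 == P1 f a) = linked0 a.
Proof.
apply/eqP/idP => [P1a | a_lnk].
  have : (0 : H) \in P1 f 0 by rewrite inE connect0.
  by rewrite P1a inE.
apply/setP => b; rewrite !inE [RHS](same_connect connect_inc_sym a_lnk).
by rewrite -[LHS](connect_translate a) /= add0r.
Qed.

End IncidenceGraph.

Lemma card_kernel_sign (G : finZmodType) (c : pred G) (g : G) :
  (forall x y, c (x - y) = (c x == c y)) -> ~~ c g ->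
  #|G| = (2 * #|[set a | c a]|)%N.
Proof.
move=> c_sub cNg; set K := [set a | c a].
have coset : ~: K = [set a + g | a in K].
  apply/setP => x; rewrite !inE; apply/idP/imsetP => [cNx | [a + ->]].
    by exists (x - g); rewrite ?inE ?c_sub ?(negbTE cNx) ?(negbTE cNg) ?subrK.
  rewrite inE => ca; have := c_sub (a + g) g; rewrite addrK ca (negbTE cNg).
  by case: (c (a + g)).
have := cardsC K; rewrite coset card_imset; last exact: addIr.
by rewrite mul2n -addnn => ->.
Qed.

Theorem theorem3 (G H : finZmodType) (f : G -> H) :
  #|G| = #|H| -> ~~ odd #|G| -> (2 < #|G|)%N ->
  semi_planar f -> splits_in_two f ->
  let A := [set a : G | P1 f 0 == P1 f a] in
  ((0 \in A) /\ {in A &, forall x y, x - y \in A} /\ #|G| = (2 * #|A|)%N)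
  \/ A = [set: G].
Proof.
move=> _ _ _ _ two A.
have A_linked : A = [set a | linked0 f a] by apply/setP => a; rewrite !inE P1_eq0.
have lnk_sub := linked0_sub two.
rewrite A_linked.
have [all_lnk | /forallPn[g lnkNg]] := boolP [forall a, linked0 f a]; last first.
  left; split; first by rewrite inE -(subrr 0) lnk_sub.
  split; first by move=> x y; rewrite !inE lnk_sub => -> ->.
  exact: card_kernel_sign lnk_sub lnkNg.
by right; apply/setP => a; rewrite inE in_setT (forallP all_lnk).
Qed.
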